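(* There is an absolute constant $C$ such that for every anticommuting family $e_1,\dots,e_k\in\mathbb{C}^{n\times n}$ we have $\sum_{i=1}^k \mathrm{rk}(e_i^2)\le Cn^2$.
   Context: A family $e_1,\dots,e_k$ of complex $n\times n$ matrices is called anticommuting if $e_ie_j=-e_je_i$ for all distinct $i,j\in\{1,\dots,k\}$. $\mathrm{rk}$ denotes matrix rank. *)

From HB Require Import structures.
From mathcomp Require Import all_boot all_order all_algebra all_field.
Set Implicit Arguments. Unset Strict Implicit. Unset Printing Implicit Defensive.
Import GRing.Theory.
Local Open Scope ring_scope.

Definition anticommuting (n k : nat) (e : 'I_k -> 'M[algC]_n) : Prop :=
  forall i j : 'I_k, i != j -> e i *m e j = - (e j *m e i).

From HB Require Import structures.
From mathcomp Require Import all_boot all_order all_algebra all_field.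
Set Implicit Arguments. Unset Strict Implicit. Unset Printing Implicit Defensive.
Import GRing.Theory Num.Theory.
Local Open Scope ring_scope.

(* Over an algebraically closed field one can pick a row vector u and a
   column vector v with u e_i^2 v <> 0 whenever e_i^2 <> 0 (avoid the zero set
   of a nonzero polynomial). The k x k matrix M_ij = u e_i e_j v factors through C^n, so
   rank M <= n, while by anticommutation M + M^T is diagonal with entries
   2 u e_i^2 v. Hence at most 2n of the e_i^2 are nonzero, each of rank <= n. *)

Section Avoidance.

Variable F : closedFieldType.

Lemma mul_col_powers_rVpoly n (w : 'rV[F]_n) (t : F) :
  (w *m \col_j t ^+ j) 0 0 = (rVpoly w).[t].
Proof.
rewrite mxE /rVpoly horner_poly; apply: eq_bigr => j _.
by rewrite mxE valK.
Qed.

Lemma exists_row_mul_neq0 (I : finType) n (w : I -> 'rV[F]_n) :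
  exists v : 'cV_n, forall i, w i != 0 -> w i *m v != 0.
Proof.
pose p := \prod_(i | w i != 0) rVpoly (w i).
have /closed_nonrootP[t p_t] : p != 0.
  apply/prodf_neq0 => i nz_wi; apply: contraNneq nz_wi => wi0.
  by rewrite -[w i]rVpolyK wi0 linear0.
exists (\col_j t ^+ j) => i nz_wi; apply: contraNneq p_t => wiv0.
rewrite /root horner_prod (bigD1 i) //= -mul_col_powers_rVpoly wiv0.
by rewrite mxE mul0r.
Qed.

Lemma exists_mul_neq0 (I : finType) m n (A : I -> 'M[F]_(m, n)) :
  exists v : 'cV_n, forall i, A i != 0 -> A i *m v != 0.
Proof.
have [v Av] := exists_row_mul_neq0 (fun ip : I * 'I_m => row ip.2 (A ip.1)).
exists v => i nz_Ai; have /existsP[p nz_row] : [exists p, row p (A i) != 0].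
  apply: contraNT nz_Ai; rewrite negb_exists => /forallP row0_A.
  by apply/eqP/row_matrixP => p; rewrite row0; apply/eqP/negPn/row0_A.
apply: contraNneq (Av (i, p) nz_row) => Av0.
by rewrite -row_mul Av0 row0.
Qed.

Lemma exists_bilinear_neq0 (I : finType) m n (A : I -> 'M[F]_(m, n)) :
  exists (u : 'rV_m) (v : 'cV_n), forall i, A i != 0 -> (u *m A i *m v) 0 0 != 0.
Proof.
have [v Av] := exists_mul_neq0 A.
have [w Aw] := exists_mul_neq0 (fun i => (A i *m v)^T).
exists w^T, v => i nz_Ai.
have /Aw : (A i *m v)^T != 0 by rewrite trmx_eq0 Av.
set x := (A i *m v)^T *m w.
have -> : w^T *m A i *m v = x^T by rewrite /x trmx_mul trmxK mulmxA.
apply: contraNneq => x00; apply/eqP/matrixP => a b; rewrite !ord1.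
by move: x00; rewrite !mxE.
Qed.

End Avoidance.

Section Rank.

Variable F : fieldType.

Lemma mxrank_mxsub m n p q (f : 'I_p -> 'I_m) (g : 'I_q -> 'I_n) (A : 'M[F]_(m, n)) :
  (\rank (mxsub f g A) <= \rank A)%N.
Proof.
rewrite -[A]mulmx1 mxsub_mul; apply: leq_trans (mxrankM_maxl _ _) _.
by rewrite mulmx1 mxrankS ?rowsub_sub.
Qed.

Lemma card_le_mxrank_diag k (D : 'M[F]_k) (J : {set 'I_k}) :
    {in J &, forall i j, i != j -> D i j = 0} -> {in J, forall i, D i i != 0} ->
  (#|J| <= \rank D)%N.
Proof.
move=> D_offdiag D_diag; pose g (a : 'I_#|J|) := enum_val a.
have diag_DJ : mxsub g g D = diag_mx (\row_a D (g a) (g a)).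
  apply/matrixP => a b; rewrite !mxE; have [<- | neq_ab] := eqVneq a b.
    by rewrite mulr1n.
  by rewrite mulr0n D_offdiag ?enum_valP // (inj_eq enum_val_inj).
rewrite -(mxrank_unit (_ : mxsub g g D \in unitmx)) ?mxrank_mxsub //.
rewrite diag_DJ unitmxE det_diag unitfE; apply/prodf_neq0 => a _.
by rewrite mxE D_diag ?enum_valP.
Qed.

End Rank.

Lemma card_sq_neq0_anticomm (F : closedFieldType) n k (e : 'I_k -> 'M[F]_n) :
    2%:R != 0 :> F -> (forall i j, i != j -> e i *m e j = - (e j *m e i)) ->
  (#|[set i | e i *m e i != 0%R]| <= 2 * n)%N.
Proof.
move=> two_neq0 e_anticomm.
have [u [v uev]] := exists_bilinear_neq0 (fun i => e i *m e i).
pose M := \matrix_(i, j) (u *m (e i *m e j) *m v) 0 0.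
have rankM : (\rank M <= n)%N.
  have -> : M = \matrix_i (u *m e i) *m \matrix_(p, j) (e j *m v) p 0.
    apply/matrixP => i j; rewrite [LHS]mxE mulmxA -mulmxA !mxE.
    by apply: eq_bigr => p _; rewrite !mxE.
  exact: leq_trans (mxrankM_maxl _ _) (rank_leq_col _).
have DE i j : (M + M^T) i j = (u *m (e i *m e j + e j *m e i) *m v) 0 0.
  by rewrite mulmxDr mulmxDl !mxE.
apply: leq_trans (_ : (\rank (M + M^T)%R <= _)%N).
  apply: card_le_mxrank_diag => [i j _ _ neq_ij | i]; rewrite DE.
    by rewrite e_anticomm // addNr mulmx0 mul0mx mxE.
  rewrite inE mulmxDr mulmxDl mxE -mulr2n -mulr_natr => /uev nz_uev.
  exact: mulf_neq0.
apply: leq_trans (mxrank_add _ _) _.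
by rewrite mxrank_tr addnn -mul2n leq_mul2l rankM orbT.
Qed.

Theorem mainTheorem3 :
  exists C : nat, forall (n k : nat) (e : 'I_k -> 'M[algC]_n),
    anticommuting e ->
    (\sum_(i < k) \rank (e i *m e i) <= C * n ^ 2)%N.
Proof.
exists 2 => n k e e_anticomm.
have two_neq0 : 2%:R != 0 :> algC by rewrite pnatr_eq0.
have card_sq := card_sq_neq0_anticomm two_neq0 e_anticomm.
apply: (@leq_trans (\sum_(i in [set i | e i *m e i != 0]) n)).
  rewrite [X in (_ <= X)%N]big_mkcond; apply: leq_sum => i _; rewrite inE.
  by case: eqP => [->|_]; rewrite ?mxrank0 ?rank_leq_row.
by rewrite sum_nat_const mulnA leq_mul2r card_sq orbT.
Qed.
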